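(* For $K\ge0$ define $g_0,g_1:[0,1]\to\mathbb{R}$ by $$g_0(u)=\begin{cases}0,&u\in[0,\frac12],\\ (u-\frac12)(1-u)(u-\frac23),&u\in(\frac12,1],\end{cases}\qquad g_1(u)=\begin{cases}0,&u\in[0,\frac1{11}]\cup[\frac12,\frac23],\\ K\operatorname{dist}(u,\{\frac1{11},\frac12\}),&u\in(\frac1{11},\frac12),\\ (u-\frac12)(1-u)(u-\frac23),&u\in(\frac23,1].\end{cases}$$ There are $M>0$ and $a\in(0,\frac1{16})$ (independent of $K$) such that the following hold for solutions $u$ with values in $[0,1]$: (i) If $u_t=u_{xx}+g_0(u)$ on $(0,1)\times\mathbb{R}$ and $u(0,\cdot)\le\chi_{(-\infty,0]}+\frac58\chi_{(0,\infty)}$, then $u(1,\cdot)\le\chi_{(-\infty,M]}+(\frac58-2a)\chi_{(M,\infty)}$. (ii) For all $K\ge0$: if $u_t=u_{xx}+g_1(u)$ on $(1,4)\times\mathbb{R}$ and $u(1,\cdot)\le\chi_{(-\infty,M]}+(\frac58-2a)\chi_{(M,\infty)}$, then $u(4,\cdot)\le\chi_{(-\infty,2M]}+(\frac58-a)\chi_{(2M,\infty)}$. (iii) If $u_t=u_{xx}+g_0(u)$ on $(-1,2)\times\mathbb{R}$ and $u(-1,\cdot)\ge\frac4{11}\chi_{(-M,M)}$, then $\min\{u(0,\cdot),u(2,\cdot)\}\ge\frac3{11}\chi_{(-1,1)}$. (iv) For all large enough $K$: if $u_t=u_{xx}+g_1(u)$ on $(2,3)\times\mathbb{R}$ and $u(2,\cdot)\ge\frac2{11}\chi_{(-1,1)}$,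 then $u(3,\cdot)\ge\frac5{11}\chi_{(-4M,4M)}$.
   Context: $\chi_A$ denotes the indicator function of the set $A$. Solutions are classical solutions of the stated semilinear heat equations taking values in $[0,1]$ (the domain of $g_0,g_1$). *)

From Stdlib Require Import Reals Lra ClassicalDescription.
From Coquelicot Require Import Coquelicot.
Open Scope R_scope.

Definition chi (A : R -> Prop) (x : R) : R :=
  if excluded_middle_informative (A x) then 1 else 0.

(* The nonlinearity g0 (formula on [0,1]; extended to R by the same
   piecewise formula, irrelevant for [0,1]-valued solutions). *)
Definition g0 (v : R) : R :=
  if Rle_dec v (1/2) then 0 else (v - 1/2) * (1 - v) * (v - 2/3).

(* The nonlinearity g1 with parameter K; for v in (1/11,1/2),
   dist(v,{1/11,1/2}) = min (v - 1/11) (1/2 - v). *)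
Definition g1 (K : R) (v : R) : R :=
  if Rle_dec v (1/11) then 0
  else if Rlt_dec v (1/2) then K * Rmin (Rabs (v - 1/11)) (Rabs (v - 1/2))
  else if Rle_dec v (2/3) then 0
  else (v - 1/2) * (1 - v) * (v - 2/3).

Definition heat_sol (g : R -> R) (t0 t1 : R) (u : R -> R -> R) : Prop :=
  (forall t x, t0 <= t <= t1 -> 0 <= u t x <= 1) /\
  (forall t x, t0 <= t <= t1 ->
     filterlim (fun p : R * R => u (fst p) (snd p))
       (within (fun p : R * R => t0 <= fst p <= t1) (locally (t, x)))
       (locally (u t x))) /\
  (forall t x, t0 < t < t1 ->
     ex_derive (fun s => u s x) t /\
     ex_derive (fun y => u t y) x /\
     ex_derive (fun y => Derive (fun z => u t z) y) x /\
     continuous (fun p : R * R => Derive (fun s => u s (snd p)) (fst p)) (t, x) /\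
     continuous (fun p : R * R => Derive_n (fun y => u (fst p) y) 2 (snd p)) (t, x) /\
     Derive (fun s => u s x) t = Derive_n (fun y => u t y) 2 x + g (u t x)).

(* Each estimate compares the solution, on a bounded rectangle, with an explicit sub- or
   supersolution, using a weak maximum principle proved by the first-touching-time
   argument.  For (i) and (ii) the supersolution is a constant level [c(t)] plus the
   bump [e^-40 e^(2(t-t0)) (e^(x-x0) + e^(x0-x))] centred at a point [x0] beyond the
   front: it exceeds [1] on the sides of [[x0-40, x0+40]] and is below [1/4000] at the
   centre; in (i) the cubic is [<= -1/1000] near [5/8], which lets [c(t)] decrease by
   [1/1000].  For (iii) the subsolution [4/11 - (x^2 + 2(t+1))/77] solves the heat
   equation and stays below [1/2], where [g0] vanishes.  For (iv) the subsolution is a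
   travelling bump [P(t) sech(1500 (x - x0 (t-2))) - 2/33] whose amplitude grows from
   [8/33] to [17/33]: it is pushed up by [g1] of slope [K] where its value lies in
   [(1/11, 1/2)].  This gives the lemma with [M = 40], [a = 1/4000], [K0 = 3e8]. *)

From Stdlib Require Import Reals Lra Classical ClassicalDescription IndefiniteDescription.
From Coquelicot Require Import Coquelicot.
Open Scope R_scope.

Lemma ball_R2 (x y e : R) (p : R * R) :
  ball (x, y) e p <-> Rabs (fst p - x) < e /\ Rabs (snd p - y) < e.
Proof. destruct p; reflexivity. Qed.

Definition rect_continuous (z : R -> R -> R) (t0 T a b : R) : Prop :=
  forall t x, t0 <= t <= T -> a <= x <= b -> forall eps, 0 < eps ->
  exists del, 0 < del /\
    forall s y, t0 <= s <= T -> Rabs (s - t) < del -> a <= y <= b -> Rabs (y - x) < del ->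
    Rabs (z s y - z t x) < eps.

Lemma continuous_rect_continuous (v : R -> R -> R) t0 T a b :
  (forall t x, continuous (fun p : R * R => v (fst p) (snd p)) (t, x)) ->
  rect_continuous v t0 T a b.
Proof.
  intros Hc t x _ _ eps He.
  destruct (proj1 (filterlim_locally _ _) (Hc t x) (mkposreal eps He)) as [d Hd].
  exists d; split; [apply cond_pos|].
  intros s y _ Hst _ Hyx. exact (Hd (s, y) (proj2 (ball_R2 t x d (s, y)) (conj Hst Hyx))).
Qed.

Lemma heat_sol_rect_continuous g t0 t1 u a b :
  heat_sol g t0 t1 u -> rect_continuous u t0 t1 a b.
Proof.
  intros [_ [Hc _]] t x Ht _ eps He.
  destruct (proj1 (filterlim_locally _ _) (Hc t x Ht) (mkposreal eps He)) as [d Hd].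
  exists d; split; [apply cond_pos|].
  intros s y Hs Hst _ Hyx. exact (Hd (s, y) (proj2 (ball_R2 t x d (s, y)) (conj Hst Hyx)) Hs).
Qed.

Lemma rect_continuous_minus p q t0 T a b :
  rect_continuous p t0 T a b -> rect_continuous q t0 T a b ->
  rect_continuous (fun t x => p t x - q t x) t0 T a b.
Proof.
  intros Hp Hq t x Ht Hx eps He.
  destruct (Hp t x Ht Hx (eps / 2)) as [d1 [Hd1 P1]]; [lra|].
  destruct (Hq t x Ht Hx (eps / 2)) as [d2 [Hd2 P2]]; [lra|].
  exists (Rmin d1 d2); split; [apply Rmin_glb_lt; lra|].
  intros s y Hs Hst Hy Hyx.
  assert (A1 := P1 s y Hs (Rlt_le_trans _ _ _ Hst (Rmin_l _ _)) Hy
                 (Rlt_le_trans _ _ _ Hyx (Rmin_l _ _))).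
  assert (A2 := P2 s y Hs (Rlt_le_trans _ _ _ Hst (Rmin_r _ _)) Hy
                 (Rlt_le_trans _ _ _ Hyx (Rmin_r _ _))).
  apply Rabs_def2 in A1; apply Rabs_def2 in A2; apply Rabs_def1; lra.
Qed.

Lemma rect_continuous_pos_before z t0 T a b s x :
  rect_continuous z t0 T a b -> t0 < s <= T -> a <= x <= b -> 0 < z s x ->
  exists s', t0 < s' < s /\ 0 < z s' x.
Proof.
  intros Hz Hs Hx Hpos.
  destruct (Hz s x ltac:(lra) Hx (z s x / 2)) as [d [Hd P]]; [lra|].
  assert (Hm : 0 < Rmin d (s - t0)) by (apply Rmin_glb_lt; lra).
  assert (Rmin d (s - t0) <= d) by apply Rmin_l.
  assert (Rmin d (s - t0) <= s - t0) by apply Rmin_r.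
  exists (s - Rmin d (s - t0) / 2); split; [lra|].
  assert (Q := P (s - Rmin d (s - t0) / 2) x ltac:(lra)
                 ltac:(rewrite Rabs_left; lra) Hx
                 ltac:(rewrite Rminus_eq_0, Rabs_R0; lra)).
  apply Rabs_def2 in Q; lra.
Qed.

(* Uniformity in [x] comes from compactness of [[a, b]] ([compactness_value_1d]). *)
Lemma rect_continuous_neg_near q t0 T a b s :
  rect_continuous q t0 T a b -> t0 <= s <= T -> (forall x, a <= x <= b -> q s x < 0) ->
  exists d, 0 < d /\ forall t x, t0 <= t <= T -> Rabs (t - s) < d -> a <= x <= b -> q t x < 0.
Proof.
  intros Hq Hs Hneg.
  assert (Ex : forall x, exists d : posreal, a <= x <= b -> forall t y, t0 <= t <= T ->
            Rabs (t - s) < d -> a <= y <= b -> Rabs (y - x) < d -> q t y < q s x / 2).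
  { intros x. destruct (classic (a <= x <= b)) as [Hx|Hx].
    - destruct (Hq s x Hs Hx (- q s x / 2)) as [d [Hd P]];
        [specialize (Hneg x Hx); lra|].
      exists (mkposreal d Hd); intros _ t y Ht Hts Hy Hyx.
      specialize (P t y Ht Hts Hy Hyx); apply Rabs_def2 in P; lra.
    - exists (mkposreal 1 Rlt_0_1); tauto. }
  pose (delta x := proj1_sig (constructive_indefinite_description _ (Ex x))).
  assert (Hdelta : forall x, a <= x <= b -> forall t y, t0 <= t <= T -> Rabs (t - s) < delta x ->
            a <= y <= b -> Rabs (y - x) < delta x -> q t y < q s x / 2)
    by (intro x; exact (proj2_sig (constructive_indefinite_description _ (Ex x)))).
  destruct (compactness_value_1d a b delta) as [d Hd].
  exists d; split; [apply cond_pos|]; intros t y Ht Hts Hy.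
  apply Rnot_le_lt; intro Hc; apply (Hd y Hy); intros [x [Hx [H1 H2]]].
  assert (q t y < q s x / 2) by (apply (Hdelta x Hx t y Ht); lra).
  specialize (Hneg x Hx); lra.
Qed.

Lemma Derive_ge0_at_left_max (f : R -> R) x del :
  ex_derive f x -> 0 < del -> (forall y, x - del < y < x -> f y <= f x) -> 0 <= Derive f x.
Proof.
  intros Hd Hdel Hm; apply Rnot_lt_le; intro Hl.
  assert (Hi := proj1 (is_derive_Reals _ _ _) (Derive_correct f x Hd)).
  destruct (Hi (- Derive f x / 2)) as [d Hd2]; [lra|].
  assert (Hmin : 0 < Rmin del d) by (apply Rmin_glb_lt; [lra | apply cond_pos]).
  assert (Rmin del d <= del) by apply Rmin_l; assert (Rmin del d <= d) by apply Rmin_r.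
  set (h := - Rmin del d / 2).
  assert (Hq := Hd2 h ltac:(unfold h; lra) ltac:(rewrite Rabs_left; unfold h; lra)).
  assert (Hf : f (x + h) <= f x) by (apply Hm; unfold h; lra).
  assert (0 <= (f (x + h) - f x) / h)
    by (assert (/ h < 0) by (apply Rinv_lt_0_compat; unfold h; lra); unfold Rdiv; nra).
  apply Rabs_def2 in Hq; lra.
Qed.

Lemma Derive2_le0_at_local_max (f : R -> R) x del : 0 < del ->
  (forall y, x - del < y < x + del -> ex_derive f y) -> ex_derive (Derive f) x ->
  (forall y, x - del < y < x + del -> f y <= f x) -> Derive (Derive f) x <= 0.
Proof.
  intros Hdel Hex Hex2 Hm.
  assert (D0 : Derive f x = 0).
  { rewrite <- (Derive_Reals f x (ex_derive_Reals_0 f x (Hex x ltac:(lra)))).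
    apply (deriv_maximum f (x - del) (x + del)); [lra | lra | intros; apply Hm; lra]. }
  apply Rnot_lt_le; intro Hl.
  assert (Hi := proj1 (is_derive_Reals _ _ _) (Derive_correct _ x Hex2)).
  destruct (Hi (Derive (Derive f) x / 2)) as [d Hd2]; [lra|].
  assert (Hmin : 0 < Rmin del d) by (apply Rmin_glb_lt; [lra | apply cond_pos]).
  assert (Rmin del d <= del) by apply Rmin_l; assert (Rmin del d <= d) by apply Rmin_r.
  set (h := Rmin del d / 2).
  (* [f'] vanishes at [x] and increases there, so it is positive just to the right. *)
  assert (Pos : forall c, x < c <= x + h -> 0 < Derive f c).
  { intros c Hc.
    assert (Hq := Hd2 (c - x) ltac:(lra) ltac:(rewrite Rabs_right; unfold h in *; lra)).
    replace (x + (c - x)) with c in Hq by ring; rewrite D0 in Hq; apply Rabs_def2 in Hq.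
    assert (Derive f c = (Derive f c - 0) / (c - x) * (c - x)) by (field; lra).
    nra. }
  destruct (MVT_cor2 f (Derive f) x (x + h)) as [c [Hc Hcx]]; [unfold h; lra| |].
  { intros c Hc; apply is_derive_Reals, Derive_correct, Hex; unfold h in *; lra. }
  assert (0 < Derive f c) by (apply Pos; lra).
  assert (f (x + h) <= f x) by (apply Hm; unfold h; lra).
  nra.
Qed.

Lemma R_glb (S : R -> Prop) (lo t1 : R) :
  (forall t, S t -> lo <= t) -> S t1 ->
  exists m, (forall t, S t -> m <= t) /\ (forall c, (forall t, S t -> c <= t) -> c <= m).
Proof.
  intros Hlo H1.
  destruct (completeness (fun r => S (- r))) as [m [Hub Hlub]].
  - exists (- lo); intros r Hr; specialize (Hlo _ Hr); lra.
  - exists (- t1); rewrite Ropp_involutive; exact H1.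
  - exists (- m); split.
    + intros t St; assert (- t <= m) by (apply Hub; rewrite Ropp_involutive; exact St); lra.
    + intros c Hc; assert (m <= - c) by (apply Hlub; intros r Sr; specialize (Hc _ Sr); lra); lra.
Qed.

Lemma first_zero_time q t0 T a b t1 x1 :
  a < b -> t0 <= t1 <= T -> rect_continuous q t0 T a b ->
  (forall x, a <= x <= b -> q t0 x < 0) -> a <= x1 <= b -> 0 <= q t1 x1 ->
  exists ts xs, t0 < ts <= t1 /\ a <= xs <= b /\ q ts xs = 0 /\
    (forall x, a <= x <= b -> q ts x <= 0) /\
    (forall t x, t0 <= t < ts -> a <= x <= b -> q t x < 0).
Proof.
  intros Hab Ht1 Hq Hinit Hx1 Hq1.
  pose (S t := t0 <= t <= t1 /\ exists x, a <= x <= b /\ 0 <= q t x).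
  destruct (R_glb S t0 t1) as [ts [Hlow Hgreat]];
    [intros t [Ht _]; lra | split; [lra | exists x1; auto] |].
  assert (Hts1 : ts <= t1) by (apply Hlow; split; [lra | exists x1; auto]).
  assert (Before : forall t x, t0 <= t < ts -> a <= x <= b -> q t x < 0).
  { intros t x Ht Hx; apply Rnot_le_lt; intro Hqx.
    assert (ts <= t) by (apply Hlow; split; [lra | exists x; auto]); lra. }
  assert (Hts_ge : t0 <= ts) by (apply Hgreat; intros t [Ht _]; lra).
  assert (Strip : forall s, t0 <= s <= ts -> (forall x, a <= x <= b -> q s x < 0) -> s < ts).
  { intros s Hs Hneg.
    destruct (rect_continuous_neg_near q t0 T a b s Hq ltac:(lra) Hneg) as [d [Hd P]].
    enough (s + d / 2 <= ts) by lra.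
    apply Hgreat; intros t [Ht [x [Hx Hqx]]]; apply Rnot_lt_le; intro Hlt.
    destruct (Rlt_le_dec t s).
    - assert (q t x < 0) by (apply Before; [|exact Hx]; lra); lra.
    - assert (q t x < 0) by (apply P; [lra | rewrite Rabs_right; lra | exact Hx]); lra. }
  assert (Hts_gt : t0 < ts) by (apply Strip; [lra | exact Hinit]).
  assert (AtTs : forall x, a <= x <= b -> q ts x <= 0).
  { intros x Hx; apply Rnot_lt_le; intro Hpos.
    destruct (rect_continuous_pos_before q t0 T a b ts x Hq ltac:(lra) Hx Hpos)
      as [s [Hs Hqs]].
    assert (q s x < 0) by (apply Before; [lra | exact Hx]); lra. }
  destruct (classic (exists xs, a <= xs <= b /\ q ts xs = 0)) as [[xs [Hxs Hz]] | Hno].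
  - exists ts, xs; repeat split; auto; lra.
  - exfalso; enough (ts < ts) by lra.
    apply Strip; [lra|]; intros x Hx.
    destruct (Rle_lt_or_eq_dec _ _ (AtTs x Hx)); [assumption | exfalso; eauto].
Qed.

Definition heat_op (z : R -> R -> R) (t x : R) : R :=
  Derive (fun s => z s x) t - Derive (fun y => Derive (fun y => z t y) y) x.

Definition parabolic_regular (z : R -> R -> R) (t0 T : R) : Prop :=
  forall t x, t0 < t < T ->
    ex_derive (fun s => z s x) t /\ ex_derive (fun y => z t y) x /\
    ex_derive (fun y => Derive (fun y => z t y) y) x.

Lemma parabolic_regular_minus p q t0 T :
  parabolic_regular p t0 T -> parabolic_regular q t0 T ->
  parabolic_regular (fun t x => p t x - q t x) t0 T /\
  forall t x, t0 < t < T -> heat_op (fun t x => p t x - q t x) t x = heat_op p t x - heat_op q t x.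
Proof.
  intros Hp Hq.
  assert (Dxx : forall t, t0 < t < T -> forall y,
            Derive (fun y => p t y - q t y) y
            = Derive (fun y => p t y) y - Derive (fun y => q t y) y)
    by (intros t Ht y; apply Derive_minus; [apply (Hp t y Ht) | apply (Hq t y Ht)]).
  split.
  - intros t x Ht; destruct (Hp t x Ht) as [P1 [P2 P3]]; destruct (Hq t x Ht) as [Q1 [Q2 Q3]].
    split; [|split].
    + apply (ex_derive_minus (fun s => p s x) (fun s => q s x)); assumption.
    + apply (ex_derive_minus (fun y => p t y) (fun y => q t y)); assumption.
    + apply (ex_derive_ext (fun y => Derive (fun y => p t y) y - Derive (fun y => q t y) y));
        [intro y; symmetry; apply (Dxx t Ht) |].
      apply (ex_derive_minus (fun y => Derive (fun y => p t y) y)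
               (fun y => Derive (fun y => q t y) y)); assumption.
  - intros t x Ht; destruct (Hp t x Ht) as [P1 [_ P3]]; destruct (Hq t x Ht) as [Q1 [_ Q3]].
    assert (Et : Derive (fun s => p s x - q s x) t
                 = Derive (fun s => p s x) t - Derive (fun s => q s x) t)
      by (apply Derive_minus; assumption).
    assert (Ex : Derive (fun y => Derive (fun y => p t y) y - Derive (fun y => q t y) y) x
                 = Derive (fun y => Derive (fun y => p t y) y) x
                   - Derive (fun y => Derive (fun y => q t y) y) x)
      by (apply Derive_minus; assumption).
    unfold heat_op; cbv beta.
    rewrite Et, (Derive_ext (fun y => Derive (fun y => p t y - q t y) y) _ x (Dxx t Ht)), Ex.
    ring.
Qed.

Lemma heat_sol_regular g t0 t1 u : heat_sol g t0 t1 u -> parabolic_regular u t0 t1.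
Proof. intros [_ [_ Hd]] t x Ht; destruct (Hd t x Ht) as [A [B [C _]]]; auto. Qed.

Lemma heat_sol_heat_op g t0 t1 u t x :
  heat_sol g t0 t1 u -> t0 < t < t1 -> heat_op u t x = g (u t x).
Proof.
  intros [_ [_ Hd]] Ht; destruct (Hd t x Ht) as [_ [_ [_ [_ [_ E]]]]].
  unfold heat_op; rewrite E.
  change (Derive_n (fun y => u t y) 2 x)
    with (Derive (fun y => Derive (fun y => u t y) y) x); ring.
Qed.

Lemma heat_op_ge_at_first_contact z h h' t0 T a b ts xs :
  parabolic_regular z t0 T -> is_derive h ts h' -> t0 < ts < T -> a < xs < b ->
  z ts xs = h ts -> (forall y, a <= y <= b -> z ts y <= h ts) ->
  (forall t, t0 <= t < ts -> z t xs < h t) ->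
  h' <= heat_op z ts xs.
Proof.
  intros Hreg Hh Hts Hxs Hzh Hmax Hbefore.
  destruct (Hreg ts xs Hts) as [Dt _].
  assert (Dxx : Derive (fun y => Derive (fun y => z ts y) y) xs <= 0).
  { pose (del := Rmin (xs - a) (b - xs)).
    assert (0 < del) by (apply Rmin_glb_lt; lra).
    assert (del <= xs - a) by apply Rmin_l; assert (del <= b - xs) by apply Rmin_r.
    apply (Derive2_le0_at_local_max (fun y => z ts y) xs del); [lra | | apply (Hreg ts xs Hts) |].
    - intros y Hy; apply (Hreg ts y Hts).
    - intros y Hy; rewrite Hzh; apply Hmax; lra. }
  assert (Dq : 0 <= Derive (fun s => z s xs - h s) ts).
  { apply (Derive_ge0_at_left_max _ ts (ts - t0)); [| lra |].
    - apply (ex_derive_minus (fun s => z s xs) h); [exact Dt | eexists; apply Hh].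
    - intros y Hy; specialize (Hbefore y ltac:(lra)); lra. }
  assert (Eq : Derive (fun s => z s xs - h s) ts = Derive (fun s => z s xs) ts - h').
  { rewrite <- (is_derive_unique h ts _ Hh).
    apply Derive_minus; [exact Dt | eexists; apply Hh]. }
  unfold heat_op; lra.
Qed.

Lemma max_principle z t0 T a b L :
  t0 < T -> a < b -> 0 <= L ->
  rect_continuous z t0 T a b -> parabolic_regular z t0 T ->
  (forall t x, t0 < t < T -> a < x < b -> 0 < z t x -> heat_op z t x <= L * z t x) ->
  (forall x, a <= x <= b -> z t0 x <= 0) ->
  (forall t, t0 <= t <= T -> z t a <= 0 /\ z t b <= 0) ->
  forall t x, t0 <= t <= T -> a <= x <= b -> z t x <= 0.
Proof.
  intros HT Hab HL Hc Hreg Hop Hinit Hbd t1 x1 Ht1 Hx1.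
  apply Rnot_lt_le; intro Hpos.
  assert (Ht1_gt : t0 < t1) by (destruct (Req_dec t1 t0); [subst; specialize (Hinit x1 Hx1)|]; lra).
  destruct (rect_continuous_pos_before z t0 T a b t1 x1 Hc ltac:(lra) Hx1 Hpos) as [t2 [Ht2 Hz2]].
  (* Compare [z] with [h] growing at rate [L + 1]: at the first contact [h' > L h]. *)
  pose (e := z t2 x1 / (2 * exp ((L + 1) * (t2 - t0)))).
  pose (h t := e * exp ((L + 1) * (t - t0))).
  assert (He : 0 < e)
    by (apply Rdiv_lt_0_compat; [lra | assert (Q := exp_pos ((L + 1) * (t2 - t0))); lra]).
  assert (Hh : forall t, 0 < h t) by (intro t; apply Rmult_lt_0_compat; [lra | apply exp_pos]).
  assert (Hh' : forall t, is_derive h t ((L + 1) * h t))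
    by (intro t; unfold h; auto_derive; [auto | unfold Rminus; ring]).
  assert (Hh2 : z t2 x1 = 2 * h t2)
    by (unfold h, e; field; apply Rgt_not_eq, exp_pos).
  pose (q t x := z t x - h t).
  assert (Hq : rect_continuous q t0 T a b).
  { apply rect_continuous_minus; [exact Hc|]; apply continuous_rect_continuous; intros t x.
    apply (continuous_comp (fun p : R * R => fst p) h); [apply continuous_fst|].
    apply (ex_derive_continuous h); eexists; apply Hh'. }
  destruct (first_zero_time q t0 T a b t2 x1 Hab ltac:(lra) Hq) as
      [ts [xs [Hts [Hxs [Hq0 [Hmax Hbefore]]]]]];
    [intros x Hx; specialize (Hinit x Hx); specialize (Hh t0); unfold q; lra | exact Hx1 |
     unfold q; lra |].
  unfold q in Hq0, Hmax, Hbefore.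
  assert (Hxs' : a < xs < b).
  { destruct (Hbd ts ltac:(lra)) as [Ha Hb]; specialize (Hh ts).
    split; apply Rnot_le_lt; intro;
      [replace xs with a in Hq0 by lra | replace xs with b in Hq0 by lra]; lra. }
  assert (Hop' := heat_op_ge_at_first_contact z h _ t0 T a b ts xs Hreg (Hh' ts) ltac:(lra)
                    Hxs' ltac:(lra) ltac:(intros y Hy; specialize (Hmax y Hy); lra)
                    ltac:(intros t Ht; specialize (Hbefore t xs Ht ltac:(lra)); lra)).
  specialize (Hh ts); specialize (Hop ts xs ltac:(lra) Hxs' ltac:(lra)).
  assert (L * z ts xs = L * h ts) by (f_equal; lra).
  lra.
Qed.

Lemma comparison w1 w2 t0 T a b L :
  t0 < T -> a < b -> 0 <= L ->
  rect_continuous w1 t0 T a b -> rect_continuous w2 t0 T a b ->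
  parabolic_regular w1 t0 T -> parabolic_regular w2 t0 T ->
  (forall t x, t0 < t < T -> a < x < b -> w2 t x < w1 t x ->
     heat_op w1 t x - heat_op w2 t x <= L * (w1 t x - w2 t x)) ->
  (forall x, a <= x <= b -> w1 t0 x <= w2 t0 x) ->
  (forall t, t0 <= t <= T -> w1 t a <= w2 t a /\ w1 t b <= w2 t b) ->
  forall t x, t0 <= t <= T -> a <= x <= b -> w1 t x <= w2 t x.
Proof.
  intros HT Hab HL Hc1 Hc2 Hr1 Hr2 Hop Hinit Hbd t x Ht Hx.
  destruct (parabolic_regular_minus w1 w2 t0 T Hr1 Hr2) as [Hr Hop12].
  enough (w1 t x - w2 t x <= 0) by lra.
  apply (max_principle (fun t x => w1 t x - w2 t x) t0 T a b L HT Hab HL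
           (rect_continuous_minus _ _ _ _ _ _ Hc1 Hc2) Hr); [| | | exact Ht | exact Hx].
  - intros s y Hs Hy Hpos; rewrite Hop12 by exact Hs; apply Hop; [exact Hs | exact Hy | lra].
  - intros y Hy; specialize (Hinit y Hy); lra.
  - intros s Hs; destruct (Hbd s Hs); lra.
Qed.

Record explicit_derivatives (v vt vx vxx : R -> R -> R) : Prop := {
  explicit_dt : forall t x, is_derive (fun s => v s x) t (vt t x);
  explicit_dx : forall t x, is_derive (fun y => v t y) x (vx t x);
  explicit_dxx : forall t x, is_derive (fun y => vx t y) x (vxx t x);
  explicit_continuous : forall t x, continuous (fun p : R * R => v (fst p) (snd p)) (t, x) }.

Section ExplicitDerivatives.
Variables v vt vx vxx : R -> R -> R.
Hypothesis Hv : explicit_derivatives v vt vx vxx.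

Let Derive_x t y : Derive (fun y => v t y) y = vx t y.
Proof. apply is_derive_unique, (explicit_dx _ _ _ _ Hv). Qed.

Lemma explicit_regular t0 T : parabolic_regular v t0 T.
Proof.
  intros t x _; split; [|split];
    [exists (vt t x); apply (explicit_dt _ _ _ _ Hv)
    | exists (vx t x); apply (explicit_dx _ _ _ _ Hv) |].
  apply (ex_derive_ext (fun y => vx t y)); [intro y; symmetry; apply Derive_x |].
  exists (vxx t x); apply (explicit_dxx _ _ _ _ Hv).
Qed.

Lemma explicit_heat_op t x : heat_op v t x = vt t x - vxx t x.
Proof.
  assert (Et : Derive (fun s => v s x) t = vt t x)
    by (apply is_derive_unique, (explicit_dt _ _ _ _ Hv)).
  assert (Exx : Derive (fun y => vx t y) x = vxx t x)
    by (apply is_derive_unique, (explicit_dxx _ _ _ _ Hv)).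
  unfold heat_op.
  rewrite (Derive_ext (fun y => Derive (fun y => v t y) y) (fun y => vx t y) x (Derive_x t)).
  rewrite Et, Exx; reflexivity.
Qed.

Lemma explicit_rect_continuous t0 T a b : rect_continuous v t0 T a b.
Proof. apply continuous_rect_continuous, (explicit_continuous _ _ _ _ Hv). Qed.

End ExplicitDerivatives.

Lemma explicit_le_heat_sol v vt vx vxx g u t0 T a b L :
  explicit_derivatives v vt vx vxx -> heat_sol g t0 T u -> t0 < T -> a < b -> 0 <= L ->
  (forall t x, t0 < t < T -> a < x < b -> u t x < v t x ->
     vt t x - vxx t x - g (u t x) <= L * (v t x - u t x)) ->
  (forall x, a <= x <= b -> v t0 x <= u t0 x) ->
  (forall t, t0 <= t <= T -> v t a <= u t a /\ v t b <= u t b) ->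
  forall t x, t0 <= t <= T -> a <= x <= b -> v t x <= u t x.
Proof.
  intros Hv Hu HT Hab HL Hop.
  apply (comparison v u t0 T a b L HT Hab HL (explicit_rect_continuous _ _ _ _ Hv t0 T a b)
           (heat_sol_rect_continuous _ _ _ _ _ _ Hu) (explicit_regular _ _ _ _ Hv t0 T)
           (heat_sol_regular _ _ _ _ Hu)).
  intros t x Ht Hx Hlt.
  rewrite (explicit_heat_op _ _ _ _ Hv), (heat_sol_heat_op _ _ _ _ _ _ Hu Ht); auto.
Qed.

Lemma heat_sol_le_explicit v vt vx vxx g u t0 T a b L :
  explicit_derivatives v vt vx vxx -> heat_sol g t0 T u -> t0 < T -> a < b -> 0 <= L ->
  (forall t x, t0 < t < T -> a < x < b -> v t x < u t x ->
     g (u t x) - (vt t x - vxx t x) <= L * (u t x - v t x)) ->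
  (forall x, a <= x <= b -> u t0 x <= v t0 x) ->
  (forall t, t0 <= t <= T -> u t a <= v t a /\ u t b <= v t b) ->
  forall t x, t0 <= t <= T -> a <= x <= b -> u t x <= v t x.
Proof.
  intros Hv Hu HT Hab HL Hop.
  apply (comparison u v t0 T a b L HT Hab HL (heat_sol_rect_continuous _ _ _ _ _ _ Hu)
           (explicit_rect_continuous _ _ _ _ Hv t0 T a b) (heat_sol_regular _ _ _ _ Hu)
           (explicit_regular _ _ _ _ Hv t0 T)).
  intros t x Ht Hx Hlt.
  rewrite (explicit_heat_op _ _ _ _ Hv), (heat_sol_heat_op _ _ _ _ _ _ Hu Ht); auto.
Qed.

Lemma chi_in (A : R -> Prop) x : A x -> chi A x = 1.
Proof. intro H; unfold chi; destruct (excluded_middle_informative (A x)); tauto. Qed.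

Lemma chi_out (A : R -> Prop) x : ~ A x -> chi A x = 0.
Proof. intro H; unfold chi; destruct (excluded_middle_informative (A x)); tauto. Qed.

Lemma le_chi_step (f : R -> R) M c :
  (forall x, f x <= 1) -> (forall x, M < x -> f x <= c) ->
  forall x, f x <= chi (fun y => y <= M) x + c * chi (fun y => M < y) x.
Proof.
  intros H1 Hc x; destruct (Rle_or_lt x M) as [Hx | Hx].
  - rewrite chi_in, chi_out by lra; specialize (H1 x); lra.
  - rewrite chi_out, chi_in by lra; specialize (Hc x Hx); lra.
Qed.

Lemma chi_step_le (f : R -> R) M c x :
  f x <= chi (fun y => y <= M) x + c * chi (fun y => M < y) x -> M < x -> f x <= c.
Proof. intros H Hx; rewrite chi_out, chi_in in H by lra; lra. Qed.

Lemma ge_chi_interval (f : R -> R) a b c :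
  (forall x, 0 <= f x) -> (forall x, a < x < b -> c <= f x) ->
  forall x, f x >= c * chi (fun y => a < y < b) x.
Proof.
  intros H0 Hc x; destruct (classic (a < x < b)) as [Hx | Hx].
  - rewrite chi_in by exact Hx; specialize (Hc x Hx); lra.
  - rewrite chi_out by exact Hx; specialize (H0 x); lra.
Qed.

Lemma chi_interval_ge (f : R -> R) a b c x :
  f x >= c * chi (fun y => a < y < b) x -> a < x < b -> c <= f x.
Proof. intros H Hx; rewrite chi_in in H by exact Hx; lra. Qed.

Lemma continuous_R2_plus (f g : R * R -> R) p :
  continuous f p -> continuous g p -> continuous (fun p => f p + g p) p.
Proof. intros; apply (continuous_plus f g p); auto. Qed.
Lemma continuous_R2_mult (f g : R * R -> R) p :
  continuous f p -> continuous g p -> continuous (fun p => f p * g p) p.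
Proof. intros; apply (continuous_mult f g p); auto. Qed.
Lemma continuous_R2_opp (g : R * R -> R) p : continuous g p -> continuous (fun p => - g p) p.
Proof. intros; apply (continuous_opp g p); auto. Qed.
Lemma continuous_R2_minus (f g : R * R -> R) p :
  continuous f p -> continuous g p -> continuous (fun p => f p - g p) p.
Proof. intros; apply continuous_R2_plus, continuous_R2_opp; auto. Qed.
Lemma continuous_R2_fst (p : R * R) : continuous (fun q : R * R => fst q) p.
Proof. destruct p; apply continuous_fst. Qed.
Lemma continuous_R2_snd (p : R * R) : continuous (fun q : R * R => snd q) p.
Proof. destruct p; apply continuous_snd. Qed.
Lemma continuous_R2_comp (f : R * R -> R) (h : R -> R) p :
  continuous f p -> ex_derive h (f p) -> continuous (fun p => h (f p)) p.
Proof. intros; apply (continuous_comp f h p); auto; apply (ex_derive_continuous h); auto. Qed.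

Ltac solve_continuous :=
  repeat lazymatch goal with
  | |- continuous (fun _ => ?c) _ => apply continuous_const
  | |- continuous fst _ => apply continuous_R2_fst
  | |- continuous snd _ => apply continuous_R2_snd
  | |- continuous (fun p => _ - _) _ => apply continuous_R2_minus
  | |- continuous (fun p => _ + _) _ => apply continuous_R2_plus
  | |- continuous (fun p => _ * _) _ => apply continuous_R2_mult
  | |- continuous (fun p => - _) _ => apply continuous_R2_opp
  | |- continuous (fun p => fst p) _ => apply continuous_R2_fst
  | |- continuous (fun p => snd p) _ => apply continuous_R2_snd
  | |- continuous (fun p => ?h _) _ => apply (continuous_R2_comp _ h); [| auto_derive; auto]
  end.

Definition parabola (al be t0 t x : R) : R := al - be * (x * x) - 2 * be * (t - t0).

Lemma parabola_explicit al be t0 :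
  explicit_derivatives (parabola al be t0)
    (fun _ _ => - 2 * be) (fun _ x => - 2 * be * x) (fun _ _ => - 2 * be).
Proof.
  split; intros t x; unfold parabola; [auto_derive; [auto | ring] .. | solve_continuous].
Qed.

Lemma g0_low v : v <= 1/2 -> g0 v = 0.
Proof. intro H; unfold g0; destruct (Rle_dec v (1/2)); [reflexivity | lra]. Qed.

Lemma g0_plateau_lower_bound M : 6 < M -> forall u, heat_sol g0 (-1) 2 u ->
  (forall x, u (-1) x >= 4/11 * chi (fun y => - M < y < M) x) ->
  forall x, Rmin (u 0 x) (u 2 x) >= 3/11 * chi (fun y => -1 < y < 1) x.
Proof.
  intros HM u Hu Hi.
  pose (v := parabola (4/11) (1/77) (-1)).
  assert (Hv := parabola_explicit (4/11) (1/77) (-1)).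
  assert (Hr : forall t y, -1 <= t <= 2 -> 0 <= u t y <= 1) by (intros; apply Hu; auto).
  assert (Below : forall t y, -1 <= t <= 2 -> -6 <= y <= 6 -> v t y <= u t y).
  { apply (explicit_le_heat_sol _ _ _ _ _ _ _ _ (-6) 6 0 Hv Hu); try lra.
    - intros t y Ht Hy Hlt; rewrite g0_low; [lra | unfold v, parabola in Hlt; nra].
    - intros y Hy; assert (Q := chi_interval_ge _ _ _ _ y (Hi y) ltac:(lra)).
      unfold v, parabola; nra.
    - intros t Ht; assert (Q1 := Hr t (-6) Ht); assert (Q2 := Hr t 6 Ht).
      unfold v, parabola; split; nra. }
  apply ge_chi_interval.
  - intro x; apply Rmin_glb; apply Hr; lra.
  - intros x Hx; assert (x * x <= 1) by nra.
    assert (B0 := Below 0 x ltac:(lra) ltac:(lra)); assert (B2 := Below 2 x ltac:(lra) ltac:(lra)).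
    unfold v, parabola in B0, B2; apply Rmin_glb; lra.
Qed.

Definition cosh_bump (t0 x0 t x : R) : R :=
  exp (-40) * exp (2 * (t - t0)) * (exp (x - x0) + exp (x0 - x)).

Definition front_barrier (c0 bt t0 x0 t x : R) : R := c0 - bt * (t - t0) + cosh_bump t0 x0 t x.

Lemma front_barrier_explicit c0 bt t0 x0 :
  explicit_derivatives (front_barrier c0 bt t0 x0)
    (fun t x => - bt + 2 * cosh_bump t0 x0 t x)
    (fun t x => exp (-40) * exp (2 * (t - t0)) * (exp (x - x0) - exp (x0 - x)))
    (fun t x => cosh_bump t0 x0 t x).
Proof.
  split; intros t x; unfold front_barrier, cosh_bump;
    [auto_derive; [auto | unfold Rminus; ring] .. | solve_continuous].
Qed.

Lemma cosh_bump_nonneg t0 x0 t x : 0 <= cosh_bump t0 x0 t x.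
Proof.
  unfold cosh_bump; assert (Q := exp_pos (x - x0)); assert (Q' := exp_pos (x0 - x)).
  apply Rmult_le_pos; [apply Rmult_le_pos; left; apply exp_pos | lra].
Qed.

Lemma cosh_bump_edge t0 x0 t x :
  t0 <= t -> x = x0 - 40 \/ x = x0 + 40 -> 1 <= cosh_bump t0 x0 t x.
Proof.
  intros Ht Hx; unfold cosh_bump.
  assert (E : exp (-40) * exp 40 = 1) by (rewrite <- exp_plus, <- exp_0; f_equal; ring).
  assert (1 <= exp (2 * (t - t0))) by (assert (Q := exp_ineq1_le (2 * (t - t0))); lra).
  assert (exp 40 <= exp (x - x0) + exp (x0 - x)).
  { assert (Q := exp_pos (x - x0)); assert (Q' := exp_pos (x0 - x)).
    destruct Hx as [-> | ->]; [replace (x0 - (x0 - 40)) with 40 by ring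
                             | replace (x0 + 40 - x0) with 40 by ring]; lra. }
  assert (Q := exp_pos (-40)); assert (Q' := exp_pos 40).
  assert (exp (-40) <= exp (-40) * exp (2 * (t - t0))) by nra.
  nra.
Qed.

Lemma exp30_ge : 8000 <= exp 30.
Proof.
  assert (E : exp 30 = exp 3 ^ 10)
    by (simpl; rewrite Rmult_1_r, <- !exp_plus; f_equal; ring).
  assert (H3 : 0 <= 4 <= exp 3) by (assert (Q := exp_ineq1_le 3); lra).
  assert (Q := pow_incr 4 (exp 3) 10 H3).
  replace (4 ^ 10) with 1048576 in Q by ring; rewrite E; lra.
Qed.

Lemma cosh_bump_centre t0 x0 t : t0 <= t <= t0 + 3 -> cosh_bump t0 x0 t x0 <= 1/4000.
Proof.
  intro Ht; unfold cosh_bump; rewrite Rminus_eq_0, exp_0.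
  assert (exp (-40) * exp (2 * (t - t0)) <= exp (-30)).
  { rewrite <- exp_plus; destruct (Req_dec (-40 + 2 * (t - t0)) (-30)) as [-> | ];
      [lra | left; apply exp_increasing; lra]. }
  assert (exp (-30) * exp 30 = 1) by (rewrite <- exp_plus, <- exp_0; f_equal; ring).
  assert (Q := exp30_ge); assert (Q' := exp_pos (-30)); nra.
Qed.

(* The time rate [2] of [cosh_bump] is the diffusion rate [1] plus the Lipschitz
   constant [1] used in the comparison. *)
Lemma heat_sol_upper_bound_beyond_front g t0 T c0 bt x0 u :
  t0 < T <= t0 + 3 -> 0 <= bt -> 0 <= c0 - bt * (T - t0) ->
  (forall t w, t0 <= t <= T -> c0 - bt * (t - t0) < w <= 1 ->
     g w <= w - (c0 - bt * (t - t0)) - bt) ->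
  heat_sol g t0 T u -> (forall y, x0 - 40 <= y <= x0 + 40 -> u t0 y <= c0) ->
  u T x0 <= c0 - bt * (T - t0) + 1/4000.
Proof.
  intros HT Hbt Hc Hg Hu Hi.
  pose (v := front_barrier c0 bt t0 x0).
  assert (Hv := front_barrier_explicit c0 bt t0 x0).
  assert (Hr : forall t y, t0 <= t <= T -> 0 <= u t y <= 1) by (intros; apply Hu; auto).
  assert (Above : forall t y, t0 <= t <= T -> x0 - 40 <= y <= x0 + 40 -> u t y <= v t y).
  { apply (heat_sol_le_explicit _ _ _ _ _ _ _ _ (x0 - 40) (x0 + 40) 1 Hv Hu); try lra.
    - intros t y Ht Hy Hlt.
      assert (Q := cosh_bump_nonneg t0 x0 t y).
      unfold v, front_barrier in *.
      assert (Q' := Hg t (u t y) ltac:(lra) ltac:(split; [lra | apply Hr; lra])); lra.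
    - intros y Hy; assert (Q := cosh_bump_nonneg t0 x0 t0 y); specialize (Hi y Hy).
      unfold v, front_barrier; lra.
    - intros t Ht; unfold v, front_barrier.
      assert (Q1 := cosh_bump_edge t0 x0 t (x0 - 40) ltac:(lra) ltac:(auto)).
      assert (Q2 := cosh_bump_edge t0 x0 t (x0 + 40) ltac:(lra) ltac:(auto)).
      assert (bt * (t - t0) <= bt * (T - t0)) by (apply Rmult_le_compat_l; lra).
      assert (R1 := Hr t (x0 - 40) Ht); assert (R2 := Hr t (x0 + 40) Ht); split; lra. }
  assert (Q := Above T x0 ltac:(lra) ltac:(lra)).
  assert (Q' := cosh_bump_centre t0 x0 T ltac:(lra)).
  unfold v, front_barrier in Q; lra.
Qed.

Lemma g0_bound_near_5_8 p w : 5/8 - 1/1000 <= p <= 5/8 -> p < w <= 1 -> g0 w <= w - p - 1/1000.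
Proof.
  intros Hp Hw; unfold g0; destruct (Rle_dec w (1/2)); [lra|].
  (* The cubic has slope at most 1 on [1/2, 1] and is below [-1/1000] near [5/8]. *)
  replace ((w - 1/2) * (1 - w) * (w - 2/3))
    with ((p - 1/2) * (1 - p) * (p - 2/3)
          - (w - p) * (w * w + w * p + p * p - 13/6 * (w + p) + 3/2)) by field.
  assert (w * w + w * p + p * p - 13/6 * (w + p) + 3/2 >= -1) by nra.
  assert ((p - 1/2) * (1 - p) * (p - 2/3) <= - (1/1000)) by nra.
  nra.
Qed.

Lemma g0_front_upper_bound u : heat_sol g0 0 1 u ->
  (forall x, u 0 x <= chi (fun y => y <= 0) x + 5/8 * chi (fun y => 0 < y) x) ->
  forall x, u 1 x <= chi (fun y => y <= 40) x + (5/8 - 2 * (1/4000)) * chi (fun y => 40 < y) x.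
Proof.
  intros Hu Hi; apply le_chi_step; [intro x; apply Hu; lra|]; intros x0 Hx0.
  enough (u 1 x0 <= 5/8 - 1/1000 * (1 - 0) + 1/4000) by lra.
  apply (heat_sol_upper_bound_beyond_front g0 0 1 (5/8) (1/1000) x0 u); try lra; [| exact Hu |].
  - intros t w Ht Hw.
    assert (Q := g0_bound_near_5_8 (5/8 - 1/1000 * (t - 0)) w ltac:(lra) Hw); lra.
  - intros y Hy; apply (chi_step_le (u 0) 0 (5/8) y (Hi y)); lra.
Qed.

Lemma g1_bound_above_half K c w : 1/2 <= c <= 2/3 -> c < w <= 1 -> g1 K w <= w - c.
Proof.
  intros Hc Hw; unfold g1.
  destruct (Rle_dec w (1/11)); [lra|]; destruct (Rlt_dec w (1/2)); [lra|].
  destruct (Rle_dec w (2/3)); [lra|].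
  assert ((w - 1/2) * (1 - w) <= 1/2 * (1/3)) by nra; nra.
Qed.

Lemma g1_front_upper_bound K u : heat_sol (g1 K) 1 4 u ->
  (forall x, u 1 x <= chi (fun y => y <= 40) x + (5/8 - 2 * (1/4000)) * chi (fun y => 40 < y) x) ->
  forall x, u 4 x <= chi (fun y => y <= 2 * 40) x + (5/8 - 1/4000) * chi (fun y => 2 * 40 < y) x.
Proof.
  intros Hu Hi; apply le_chi_step; [intro x; apply Hu; lra|]; intros x0 Hx0.
  enough (u 4 x0 <= 5/8 - 2 * (1/4000) - 0 * (4 - 1) + 1/4000) by lra.
  apply (heat_sol_upper_bound_beyond_front (g1 K) 1 4 (5/8 - 2 * (1/4000)) 0 x0 u);
    try lra; [| exact Hu |].
  - intros t w Ht Hw.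
    assert (Q := g1_bound_above_half K (5/8 - 2 * (1/4000)) w ltac:(lra) ltac:(lra)); lra.
  - intros y Hy; apply (chi_step_le (u 1) 40 _ y (Hi y)); lra.
Qed.

Definition sech (y : R) : R := / cosh y.
Definition sech_d (y : R) : R := - sinh y / cosh y ^ 2.
Definition sech_dd (y : R) : R := sech y * (1 - 2 * sech y ^ 2).

Lemma cosh_ge_1 y : 1 <= cosh y.
Proof.
  unfold cosh; rewrite exp_Ropp; assert (Q := exp_pos y).
  assert (Q' : 0 < / exp y) by (apply Rinv_0_lt_compat; lra).
  assert (exp y * / exp y = 1) by (field; apply Rgt_not_eq; lra).
  assert (0 <= (exp y - 1) ^ 2 * / exp y) by (apply Rmult_le_pos; [apply pow2_ge_0 | lra]).
  nra.
Qed.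

Lemma sinh_abs_le_cosh y : Rabs (sinh y) <= cosh y.
Proof.
  unfold sinh, cosh; assert (Q := exp_pos y); assert (Q' := exp_pos (- y)).
  apply Rabs_le; lra.
Qed.

Lemma sech_derive y : is_derive sech y (sech_d y).
Proof.
  assert (Q := cosh_ge_1 y); unfold sech, sech_d, sinh, cosh in *.
  auto_derive; [apply Rgt_not_eq; lra | field; apply Rgt_not_eq; lra].
Qed.

Lemma sech_d_derive y : is_derive sech_d y (sech_dd y).
Proof.
  assert (Q := cosh_ge_1 y); assert (Q' := exp_pos y).
  unfold sech_dd, sech_d, sech, sinh, cosh in *.
  auto_derive; [apply Rgt_not_eq; nra |].
  rewrite !exp_Ropp; field; split; apply Rgt_not_eq; nra.
Qed.

Lemma sech_bounds y : 0 < sech y <= 1.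
Proof.
  assert (Q := cosh_ge_1 y); unfold sech; split;
    [apply Rinv_0_lt_compat; lra | rewrite <- Rinv_1; apply Rinv_le_contravar; lra].
Qed.

Lemma sech_d_abs_le y : Rabs (sech_d y) <= sech y.
Proof.
  assert (Q := cosh_ge_1 y); assert (S := sinh_abs_le_cosh y); unfold sech_d, sech.
  assert (P : 0 < / cosh y ^ 2) by (apply Rinv_0_lt_compat, pow_lt; lra).
  unfold Rdiv; rewrite Rabs_mult, Rabs_Ropp, (Rabs_right (/ cosh y ^ 2)) by lra.
  replace (/ cosh y) with (cosh y * / cosh y ^ 2) by (field; lra).
  apply Rmult_le_compat_r; lra.
Qed.

Lemma sech_far y : 16 <= Rabs y -> sech y <= 2/17.
Proof.
  intro Hy; unfold sech, cosh; assert (Q := exp_pos y); assert (Q' := exp_pos (- y)).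
  assert (17 <= exp y + exp (- y)).
  { destruct (Rle_or_lt 0 y).
    - rewrite Rabs_right in Hy by lra; assert (E := exp_ineq1_le y); lra.
    - rewrite Rabs_left in Hy by lra; assert (E := exp_ineq1_le (- y)); lra. }
  replace (/ ((exp y + exp (- y)) / 2)) with (2 / (exp y + exp (- y))) by (field; lra).
  apply (Rmult_le_reg_r (exp y + exp (- y))); [lra|].
  unfold Rdiv; rewrite Rmult_assoc, Rinv_l by lra; nra.
Qed.

Lemma sech_0 : sech 0 = 1.
Proof. unfold sech; rewrite cosh_0; apply Rinv_1. Qed.

Definition bump_amp (t : R) : R := 8/33 + 9/33 * (t - 2).
Definition bump_arg (x0 t x : R) : R := 1500 * (x - x0 * (t - 2)).
Definition bump (x0 t x : R) : R := bump_amp t * sech (bump_arg x0 t x) - 2/33.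

Lemma bump_explicit x0 :
  explicit_derivatives (bump x0)
    (fun t x => 9/33 * sech (bump_arg x0 t x)
                + bump_amp t * (sech_d (bump_arg x0 t x) * (- (1500 * x0))))
    (fun t x => bump_amp t * (sech_d (bump_arg x0 t x) * 1500))
    (fun t x => bump_amp t * (sech_dd (bump_arg x0 t x) * 1500 * 1500)).
Proof.
  assert (D1 : forall y, Derive (fun y => sech y) y = sech_d y)
    by (intro y; apply is_derive_unique, sech_derive).
  assert (D2 : forall y, Derive (fun y => sech_d y) y = sech_dd y)
    by (intro y; apply is_derive_unique, sech_d_derive).
  split; intros t x; unfold bump, bump_amp, bump_arg;
    [auto_derive; [eexists; apply sech_derive | rewrite D1; unfold Rminus; ring] ..
    | auto_derive; [eexists; apply sech_d_derive | rewrite D2; unfold Rminus; ring]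
    | solve_continuous; eexists; apply sech_derive].
Qed.

Lemma bump_amp_bounds t : 2 <= t <= 3 -> 8/33 <= bump_amp t <= 17/33.
Proof. unfold bump_amp; lra. Qed.

Lemma bump_nonpos_far x0 t x : 2 <= t <= 3 -> 16 <= Rabs (bump_arg x0 t x) -> bump x0 t x <= 0.
Proof.
  intros Ht Hy; unfold bump.
  assert (W := sech_far _ Hy); assert (W' := sech_bounds (bump_arg x0 t x)).
  assert (P := bump_amp_bounds t Ht); nra.
Qed.

Lemma g1_nonneg K v : 0 <= K -> v <= 2/3 -> 0 <= g1 K v.
Proof.
  intros HK Hv; unfold g1.
  destruct (Rle_dec v (1/11)); [lra|]; destruct (Rlt_dec v (1/2)).
  - apply Rmult_le_pos; [lra | apply Rmin_glb; apply Rabs_pos].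
  - destruct (Rle_dec v (2/3)); lra.
Qed.

Lemma g1_mid K v : 1/11 < v < 1/2 -> g1 K v = K * Rmin (v - 1/11) (1/2 - v).
Proof.
  intros Hv; unfold g1.
  destruct (Rle_dec v (1/11)); [lra|]; destruct (Rlt_dec v (1/2)); [|lra].
  rewrite Rabs_right, Rabs_left by lra; f_equal; f_equal; ring.
Qed.

Lemma g1_lipschitz K u v : 0 <= K -> 0 <= u -> u < v -> v < 1/2 -> g1 K v - g1 K u <= K * (v - u).
Proof.
  intros HK Hu Huv Hv.
  assert (F : forall y, 0 <= y < 1/2 ->
            g1 K y = K * (if Rle_dec y (1/11) then 0 else Rmin (y - 1/11) (1/2 - y))).
  { intros y Hy; destruct (Rle_dec y (1/11)).
    - unfold g1; destruct (Rle_dec y (1/11)); [ring | lra].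
    - apply g1_mid; lra. }
  rewrite (F v), (F u) by lra; rewrite <- Rmult_minus_distr_l; apply Rmult_le_compat_l; [exact HK|].
  unfold Rmin; repeat destruct Rle_dec; lra.
Qed.

(* Where [w <= 2/3] the diffusion term [w (1 - 2 w^2) 1500^2] beats transport and growth;
   where [w > 2/3] the bump value stays [1/99] inside [(1/11, 1/2)], so [g1 >= K/99]. *)
Lemma bump_heat_op_le_g1 w d P x0 K :
  0 < w <= 1 -> Rabs d <= w -> 8/33 <= P <= 17/33 -> Rabs x0 <= 160 -> 300000000 <= K ->
  9/33 * w + P * (d * (- (1500 * x0))) - P * (w * (1 - 2 * w ^ 2) * 1500 * 1500)
  <= g1 K (P * w - 2/33).
Proof.
  intros Hw Hd HP Hx HK.
  assert (Transport : P * (d * (- (1500 * x0))) <= 240000 * P * w).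
  { assert (d * (- (1500 * x0)) <= 240000 * w); [|nra].
    eapply Rle_trans; [apply Rle_abs|].
    rewrite Rabs_mult, Rabs_Ropp, Rabs_mult, (Rabs_right 1500) by lra.
    assert (0 <= Rabs d) by apply Rabs_pos; assert (0 <= Rabs x0) by apply Rabs_pos; nra. }
  destruct (Rle_dec w (2/3)).
  - assert (1/9 <= 1 - 2 * w ^ 2) by nra.
    assert (P * (w * (1 - 2 * w ^ 2) * 1500 * 1500) >= 250000 * P * w).
    { replace (P * (w * (1 - 2 * w ^ 2) * 1500 * 1500)) with ((P * w) * (2250000 * (1 - 2 * w ^ 2)))
        by ring.
      assert (0 <= P * w) by nra; nra. }
    assert (0 <= g1 K (P * w - 2/33)) by (apply g1_nonneg; nra); nra.
  - assert (16/99 <= P * w <= 17/33) by (split; nra).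
    rewrite g1_mid by lra.
    assert (K / 99 <= K * Rmin (P * w - 2/33 - 1/11) (1/2 - (P * w - 2/33))).
    { replace (K / 99) with (K * (1/99)) by field.
      apply Rmult_le_compat_l; [lra | apply Rmin_glb; lra]. }
    assert (-1 <= w * (1 - 2 * w ^ 2)) by nra.
    assert (P * (w * (1 - 2 * w ^ 2) * 1500 * 1500) >= - 2250000 * P) by nra.
    nra.
Qed.

Lemma g1_bump_lower_bound K : 300000000 <= K -> forall u, heat_sol (g1 K) 2 3 u ->
  (forall x, u 2 x >= 2/11 * chi (fun y => -1 < y < 1) x) ->
  forall x, u 3 x >= 5/11 * chi (fun y => - (4 * 40) < y < 4 * 40) x.
Proof.
  intros HK u Hu Hi.
  assert (Hr : forall t y, 2 <= t <= 3 -> 0 <= u t y <= 1) by (intros; apply Hu; auto).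
  apply ge_chi_interval; [intro x; apply Hr; lra|]; intros x0 Hx0.
  assert (Hx0' : Rabs x0 <= 160) by (apply Rabs_le; lra).
  assert (Hv := bump_explicit x0).
  assert (Below : forall t y, 2 <= t <= 3 -> -200 <= y <= 200 -> bump x0 t y <= u t y).
  { apply (explicit_le_heat_sol _ _ _ _ _ _ _ _ (-200) 200 K Hv Hu); try lra.
    - intros t y Ht Hy Hlt.
      assert (W := sech_bounds (bump_arg x0 t y)); assert (D := sech_d_abs_le (bump_arg x0 t y)).
      assert (P := bump_amp_bounds t ltac:(lra)).
      assert (I := bump_heat_op_le_g1 _ _ _ x0 K W D P Hx0' HK).
      assert (L := g1_lipschitz K (u t y) (bump x0 t y) ltac:(lra) ltac:(apply Hr; lra) Hlt
                     ltac:(unfold bump; nra)).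
      unfold sech_dd; unfold bump in L, I |- *; lra.
    - intros y Hy; destruct (Rlt_dec (Rabs y) 1) as [Hy1 | Hy1].
      + assert (Q := chi_interval_ge _ _ _ _ y (Hi y) ltac:(apply Rabs_def2 in Hy1; lra)).
        assert (W := sech_bounds (bump_arg x0 2 y)); unfold bump, bump_amp; lra.
      + assert (bump x0 2 y <= 0).
        { apply bump_nonpos_far; [lra|]; unfold bump_arg.
          replace (y - x0 * (2 - 2)) with y by ring.
          rewrite Rabs_mult, (Rabs_right 1500) by lra; lra. }
        assert (Q := Hr 2 y ltac:(lra)); lra.
    - intros t Ht; assert (Q1 := Hr t (-200) Ht); assert (Q2 := Hr t 200 Ht).
      assert (Hs : -160 <= x0 * (t - 2) <= 160) by (split; nra).
      assert (bump x0 t (-200) <= 0 /\ bump x0 t 200 <= 0); [|lra].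
      split; apply bump_nonpos_far; try lra; unfold bump_arg;
        rewrite Rabs_mult, (Rabs_right 1500) by lra;
        [rewrite Rabs_left | rewrite Rabs_right]; lra. }
  assert (Q := Below 3 x0 ltac:(lra) ltac:(lra)).
  unfold bump, bump_arg, bump_amp in Q.
  replace (1500 * (x0 - x0 * (3 - 2))) with 0 in Q by ring; rewrite sech_0 in Q; lra.
Qed.


Theorem lemma7p1 :
  exists M a : R, 0 < M /\ 0 < a < 1/16 /\
  (* (i) *)
  (forall u : R -> R -> R, heat_sol g0 0 1 u ->
     (forall x, u 0 x <= chi (fun y => y <= 0) x + 5/8 * chi (fun y => 0 < y) x) ->
     forall x, u 1 x <= chi (fun y => y <= M) x + (5/8 - 2 * a) * chi (fun y => M < y) x) /\
  (* (ii) *)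
  (forall K : R, 0 <= K -> forall u : R -> R -> R, heat_sol (g1 K) 1 4 u ->
     (forall x, u 1 x <= chi (fun y => y <= M) x + (5/8 - 2 * a) * chi (fun y => M < y) x) ->
     forall x, u 4 x <= chi (fun y => y <= 2 * M) x + (5/8 - a) * chi (fun y => 2 * M < y) x) /\
  (* (iii) *)
  (forall u : R -> R -> R, heat_sol g0 (-1) 2 u ->
     (forall x, u (-1) x >= 4/11 * chi (fun y => - M < y < M) x) ->
     forall x, Rmin (u 0 x) (u 2 x) >= 3/11 * chi (fun y => -1 < y < 1) x) /\
  (* (iv) *)
  (exists K0 : R, forall K : R, K0 <= K -> forall u : R -> R -> R, heat_sol (g1 K) 2 3 u ->
     (forall x, u 2 x >= 2/11 * chi (fun y => -1 < y < 1) x) ->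
     forall x, u 3 x >= 5/11 * chi (fun y => - (4 * M) < y < 4 * M) x).
Proof.
  exists 40, (1/4000); split; [lra | split; [lra | split; [|split; [|split]]]].
  - exact g0_front_upper_bound.
  - intros K _; exact (g1_front_upper_bound K).
  - apply g0_plateau_lower_bound; lra.
  - exists 300000000; exact g1_bump_lower_bound.
Qed.
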